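(* Let $\varphi:[0,1]\to\mathbb{R}$ be a strictly increasing function of class $C^2[0,1]$ (so $\varphi'$ and $\varphi''$ are bounded on $[0,1]$), and set $s^-=\varphi(0)$, $s^+=\varphi(1)$. For a positive integer $N$ let $h=1/N$, $x_n=nh$, and let $\mathcal{M}^N_\varphi=\{s_n=\varphi(x_n): n=0,1,\dots,N\}$ be the induced non-uniform mesh on $[s^-,s^+]$, with steps $h_n=s_{n+1}-s_n>0$. For $1\le n\le N-1$ put $D_n=h_{n-1}^2+3h_{n-1}h_n+h_n^2$ and $$a_n=\frac{12h_n}{(h_{n-1}+h_n)D_n},\quad b_n=-\frac{12}{D_n},\quad c_n=\frac{12h_{n-1}}{(h_{n-1}+h_n)D_n},$$ $$d_n=\frac{h_n\,(h_{n-1}^2+h_nh_{n-1}-h_n^2)}{(h_{n-1}+h_n)D_n},\quad e_n=\frac{h_{n-1}\,(h_n^2+h_nh_{n-1}-h_{n-1}^2)}{(h_{n-1}+h_n)D_n}.$$ For a function $f\in C^6[s^-,s^+]$, writing $f_k=f(s_k)$ and $f''_k=f''(s_k)$, define the truncation error $E_n$ of the three-point compact approximation of the second derivative by $$d_nf''_{n-1}+f''_n+e_nf''_{n+1}=a_nf_{n-1}+b_nf_n+c_nf_{n+1}+E_n .$$ Then the approximation is fourth-order accurate on $\mathcal{M}^N_\varphi$: there is a constant $C$, depending only on $\varphi$ and $f$ (and not on $N$ or $n$), such that $|E_n|\le C h^4$ for all $N\ge 2$ and all $1\le n\le N-1$.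
   Context: The coefficients $a_n,b_n,c_n,d_n,e_n$ are those obtained by requiring that, after Taylor expansion about $s_n$, the coefficients of $f_n,f'_n,f''_n,f'''_n,f^{(4)}_n$ in $a_nf_{n-1}+b_nf_n+c_nf_{n+1}-(d_nf''_{n-1}+f''_n+e_nf''_{n+1})$ all vanish. Examples of admissible $\varphi$ on $[0,S]$ include the quadratic mesh $\varphi(x)=Sx^2$ and the Tavella–Randall mesh $\varphi(x)=K+\lambda\sinh(cx+c_1)$ with $0<K<S$, $\lambda>0$, $c=\sinh^{-1}((S-K)/\lambda)+\sinh^{-1}(K/\lambda)$, $c_1=-\sinh^{-1}(K/\lambda)$. *)

From Stdlib Require Import Reals.
Open Scope R_scope.

Definition deriv_on (a b : R) (g g' : R -> R) : Prop :=
  forall x, a <= x <= b ->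
  forall eps, 0 < eps -> exists delta, 0 < delta /\
    forall y, a <= y <= b -> y <> x -> Rabs (y - x) < delta ->
      Rabs ((g y - g x) / (y - x) - g' x) < eps.

Definition cont_on (a b : R) (g : R -> R) : Prop :=
  forall x, a <= x <= b ->
  forall eps, 0 < eps -> exists delta, 0 < delta /\
    forall y, a <= y <= b -> Rabs (y - x) < delta -> Rabs (g y - g x) < eps.

Definition Ck_derivs (a b : R) (k : nat) (D : nat -> R -> R) : Prop :=
  (forall i, (i < k)%nat -> deriv_on a b (D i) (D (S i))) /\ cont_on a b (D k).

Definition Ck_on (a b : R) (k : nat) (g : R -> R) : Prop :=
  exists D : nat -> R -> R, D 0%nat = g /\ Ck_derivs a b k D.

Definition strictly_incr_on (a b : R) (g : R -> R) : Prop :=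
  forall x y, a <= x <= b -> a <= y <= b -> x < y -> g x < g y.

Definition node (phi : R -> R) (N n : nat) : R := phi (INR n / INR N).
Definition step (phi : R -> R) (N n : nat) : R :=
  node phi N (S n) - node phi N n.

Section Coefs.
Variables (phi : R -> R) (N n : nat).
Let hm := step phi N (n - 1).
Let hp := step phi N n.
Definition Dn : R := hm ^ 2 + 3 * hm * hp + hp ^ 2.
Definition coef_a : R := 12 * hp / ((hm + hp) * Dn).
Definition coef_b : R := - (12 / Dn).
Definition coef_c : R := 12 * hm / ((hm + hp) * Dn).
Definition coef_d : R := hp * (hm ^ 2 + hp * hm - hp ^ 2) / ((hm + hp) * Dn).
Definition coef_e : R := hm * (hp ^ 2 + hp * hm - hm ^ 2) / ((hm + hp) * Dn).
End Coefs.

Definition trunc_err (phi : R -> R) (D : nat -> R -> R) (N n : nat) : R :=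
  let s := node phi N in
  let f := D 0%nat in
  let f2 := D 2%nat in
  coef_d phi N n * f2 (s (n - 1)%nat) + f2 (s n) + coef_e phi N n * f2 (s (S n))
  - (coef_a phi N n * f (s (n - 1)%nat) + coef_b phi N n * f (s n)
     + coef_c phi N n * f (s (S n))).

(* Expanding f to order 6 and f'' to order 4 about s_n, the coefficients cancel
   every Taylor term up to f^(4); the remainders are O(h^4), since a_n, c_n are
   O(h^-2) and d_n, e_n are bounded.  What survives is the f^(5) term, of size
   h_{n-1} h_n |h_n - h_{n-1}|.  For a mesh s_n = phi(n h) with phi of class C^2
   the steps are O(h) and their difference, a second difference of phi, is
   O(h^2), so this term is O(h^4) as well. *)

From Stdlib Require Import Reals Lra Lia Psatz Factorial.
From Coquelicot Require Import Coquelicot.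
Open Scope R_scope.

(* Extends a function given on [a, b] to all of R, so that the global
   continuity and mean-value theorems of the libraries apply. *)
Definition clamp (a b t : R) : R := Rmax a (Rmin b t).

Lemma clamp_in a b t : a <= b -> a <= clamp a b t <= b.
Proof. intros; unfold clamp, Rmax, Rmin; repeat destruct Rle_dec; lra. Qed.

Lemma clamp_id a b t : a <= t <= b -> clamp a b t = t.
Proof. intros; unfold clamp, Rmax, Rmin; repeat destruct Rle_dec; lra. Qed.

Lemma clamp_dist a b t x :
  a <= b -> a <= x <= b -> Rabs (clamp a b t - x) <= Rabs (t - x).
Proof.
  intros; unfold clamp, Rmax, Rmin; repeat destruct Rle_dec;
  unfold Rabs; repeat destruct Rcase_abs; lra.
Qed.

Lemma continuity_pt_clamp a b g x :
  a <= b -> cont_on a b g -> a <= x <= b ->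
  continuity_pt (fun t => g (clamp a b t)) x.
Proof.
  intros Hab Hg Hx eps Heps.
  destruct (Hg x Hx eps Heps) as [d [Hd H]].
  exists d; split; [lra|]. intros y [_ Hy]; simpl in *; unfold R_dist in *.
  rewrite (clamp_id a b x Hx). apply H; [now apply clamp_in|].
  eapply Rle_lt_trans; [apply clamp_dist; lra | exact Hy].
Qed.

Lemma cont_on_of_deriv_on a b g g' : deriv_on a b g g' -> cont_on a b g.
Proof.
  intros H x Hx eps Heps.
  destruct (H x Hx 1 Rlt_0_1) as [d [Hd Hq]].
  set (K := Rabs (g' x) + 1).
  assert (HK : 0 < K) by (unfold K; pose proof (Rabs_pos (g' x)); lra).
  exists (Rmin d (eps / K)); split.
  { apply Rmin_pos; [lra | apply Rdiv_lt_0_compat; lra]. }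
  intros y Hy Hyx.
  destruct (Req_dec y x) as [->|Hne]; [rewrite Rminus_eq_0, Rabs_R0; lra|].
  pose proof (Rmin_l d (eps / K)); pose proof (Rmin_r d (eps / K)).
  assert (Hslope : Rabs ((g y - g x) / (y - x)) <= K).
  { specialize (Hq y Hy Hne ltac:(lra)).
    pose proof (Rabs_triang_inv ((g y - g x) / (y - x)) (g' x)). unfold K; lra. }
  replace (g y - g x) with ((g y - g x) / (y - x) * (y - x)) by (field; lra).
  rewrite Rabs_mult.
  apply Rle_lt_trans with (K * Rabs (y - x)).
  { apply Rmult_le_compat_r; [apply Rabs_pos | exact Hslope]. }
  apply Rmult_lt_reg_l with (/ K); [apply Rinv_0_lt_compat; lra|].
  replace (/ K * (K * Rabs (y - x))) with (Rabs (y - x)) by (field; lra).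
  replace (/ K * eps) with (eps / K) by (unfold Rdiv; ring). lra.
Qed.

Lemma cont_on_bounded a b g :
  cont_on a b g -> exists M, 0 <= M /\ forall u, a <= u <= b -> Rabs (g u) <= M.
Proof.
  intros Hg. destruct (Rle_dec a b) as [Hab|Hba]; [|exists 0; split; [lra | intros; lra]].
  destruct (continuity_ab_maj (fun t => Rabs (g (clamp a b t))) a b Hab) as [xM [HM _]].
  { intros c Hc. apply continuity_pt_comp with (f2 := Rabs);
      [now apply continuity_pt_clamp | apply Rcontinuity_abs]. }
  exists (Rabs (g (clamp a b xM))); split; [apply Rabs_pos|].
  intros u Hu. specialize (HM u Hu); simpl in HM. now rewrite clamp_id in HM.
Qed.

Lemma deriv_on_mvt a b g g' q q' x y :
  deriv_on a b g g' -> (forall t, derivable_pt_lim q t (q' t)) ->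
  a <= x <= b -> a <= y <= b ->
  exists c, Rmin x y <= c <= Rmax x y /\
    (g y - q y) - (g x - q x) = (g' c - q' c) * (y - x).
Proof.
  intros Hg Hq Hx Hy.
  assert (Hab : a <= b) by lra.
  destruct (MVT_gen (fun t => g (clamp a b t) - q t) x y (fun t => g' t - q' t))
    as [c [Hc Heq]].
  - intros t Ht.
    assert (Hta : a < t < b) by (unfold Rmin, Rmax in Ht; destruct Rle_dec; lra).
    apply is_derive_Reals, derivable_pt_lim_minus; [|apply Hq].
    intros eps Heps.
    destruct (Hg t ltac:(lra) eps Heps) as [d [Hd H]].
    assert (Hpos : 0 < Rmin d (Rmin (t - a) (b - t))) by (repeat apply Rmin_pos; lra).
    exists (mkposreal _ Hpos). intros h Hh0 Hh; simpl in Hh.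
    pose proof (Rmin_l d (Rmin (t - a) (b - t))).
    pose proof (Rmin_r d (Rmin (t - a) (b - t))).
    pose proof (Rmin_l (t - a) (b - t)); pose proof (Rmin_r (t - a) (b - t)).
    assert (- h <= Rabs h /\ h <= Rabs h) by (unfold Rabs; destruct Rcase_abs; lra).
    rewrite (clamp_id a b (t + h)), (clamp_id a b t) by lra.
    replace h with ((t + h) - t) at 2 by ring.
    apply H; [lra | lra | replace (t + h - t) with h by ring; lra].
  - intros t Ht.
    assert (a <= t <= b) by (unfold Rmin, Rmax in Ht; destruct Rle_dec; lra).
    apply continuity_pt_minus.
    + apply continuity_pt_clamp; [lra | eapply cont_on_of_deriv_on; eauto | lra].
    + apply derivable_continuous_pt. exists (q' t). apply Hq.
  - exists c; split; [exact Hc|].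
    rewrite (clamp_id a b x Hx), (clamp_id a b y Hy) in Heq. lra.
Qed.

Fixpoint taylor_poly (G : nat -> R -> R) (k : nat) (x t : R) : R :=
  match k with
  | O => 0
  | S k => taylor_poly G k x t + G k x * (t - x) ^ k / INR (fact k)
  end.

Lemma taylor_poly_center G k x : taylor_poly G (S k) x x = G O x.
Proof.
  induction k as [|k IH]; [simpl; field|].
  change (taylor_poly G (S (S k)) x x)
    with (taylor_poly G (S k) x x + G (S k) x * (x - x) ^ S k / INR (fact (S k))).
  rewrite IH, Rminus_eq_0, pow_i by lia. field. apply INR_fact_neq_0.
Qed.

Lemma taylor_poly_derivative G k x t :
  derivable_pt_lim (taylor_poly G (S k) x) t (taylor_poly (fun j => G (S j)) k x t).
Proof.
  revert t; induction k as [|k IH]; intro t.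
  - simpl. apply derivable_pt_lim_ext with (fun _ => G 0%nat x * 1 / 1);
      [intro; ring | apply derivable_pt_lim_const].
  - change (taylor_poly G (S (S k)) x)
      with (fun t => taylor_poly G (S k) x t + G (S k) x * (t - x) ^ S k / INR (fact (S k))).
    change (taylor_poly (fun j => G (S j)) (S k) x t)
      with (taylor_poly (fun j => G (S j)) k x t + G (S k) x * (t - x) ^ k / INR (fact k)).
    apply derivable_pt_lim_plus; [apply IH|].
    replace (G (S k) x * (t - x) ^ k / INR (fact k)) with
      (G (S k) x / INR (fact (S k)) * (INR (S k) * (t - x) ^ pred (S k) * 1)).
    2:{ simpl pred. rewrite fact_simpl, mult_INR. field.
        split; [apply INR_fact_neq_0 | apply not_0_INR; lia]. }
    apply derivable_pt_lim_ext with
      (mult_real_fct (G (S k) x / INR (fact (S k))) (comp (fun u => u ^ S k) (fun u => u - x))).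
    { intro u. unfold mult_real_fct, comp. field. apply INR_fact_neq_0. }
    apply derivable_pt_lim_scal, derivable_pt_lim_comp.
    + replace 1 with (1 - 0) by ring.
      apply derivable_pt_lim_minus; [apply derivable_pt_lim_id | apply derivable_pt_lim_const].
    + apply derivable_pt_lim_pow.
Qed.

Lemma taylor_remainder_bound a b k G M x t :
  (forall i, (i < k)%nat -> deriv_on a b (G i) (G (S i))) ->
  (forall u, a <= u <= b -> Rabs (G k u) <= M) ->
  a <= x <= b -> a <= t <= b ->
  Rabs (G O t - taylor_poly G k x t) <= M * Rabs (t - x) ^ k.
Proof.
  revert G t; induction k as [|k IH]; intros G t HG HM Hx Ht.
  { simpl. rewrite Rminus_0_r, Rmult_1_r. now apply HM. }
  assert (HM0 : 0 <= M) by (eapply Rle_trans; [apply Rabs_pos | apply (HM x Hx)]).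
  destruct (deriv_on_mvt a b (G O) (G 1%nat) (taylor_poly G (S k) x)
              (taylor_poly (fun j => G (S j)) k x) x t) as [c [Hc Heq]]; auto.
  { apply HG; lia. }
  { intro; apply taylor_poly_derivative. }
  rewrite taylor_poly_center, Rminus_eq_0, Rminus_0_r in Heq.
  rewrite Heq, Rabs_mult.
  assert (a <= c <= b) by (unfold Rmin, Rmax in Hc; destruct Rle_dec; lra).
  assert (Hcx : Rabs (c - x) <= Rabs (t - x)).
  { unfold Rmin, Rmax in Hc; destruct Rle_dec; unfold Rabs; repeat destruct Rcase_abs; lra. }
  assert (IHc : Rabs (G 1%nat c - taylor_poly (fun j => G (S j)) k x c) <= M * Rabs (c - x) ^ k).
  { apply (IH (fun j => G (S j))); auto. intros i Hi. apply HG. lia. }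
  apply Rle_trans with (M * Rabs (c - x) ^ k * Rabs (t - x)).
  { apply Rmult_le_compat_r; [apply Rabs_pos | exact IHc]. }
  simpl. rewrite (Rmult_comm (Rabs (t - x))), <- Rmult_assoc.
  apply Rmult_le_compat_r; [apply Rabs_pos|].
  apply Rmult_le_compat_l; [exact HM0|].
  apply pow_incr. split; [apply Rabs_pos | exact Hcx].
Qed.

Lemma lipschitz_of_deriv_on a b g g' :
  deriv_on a b g g' -> cont_on a b g' ->
  exists L, 0 <= L /\ forall x y, a <= x <= b -> a <= y <= b ->
    Rabs (g y - g x) <= L * Rabs (y - x).
Proof.
  intros Hg Hg'. destruct (cont_on_bounded a b g' Hg') as [L [HL0 HL]].
  exists L; split; [exact HL0|]. intros x y Hx Hy.
  destruct (deriv_on_mvt a b g g' (fun _ => 0) (fun _ => 0) x y) as [c [Hc Heq]]; auto.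
  { intro; apply derivable_pt_lim_const. }
  replace (g y - g x) with ((g' c - 0) * (y - x)) by lra.
  rewrite Rminus_0_r, Rabs_mult. apply Rmult_le_compat_r; [apply Rabs_pos|].
  apply HL. unfold Rmin, Rmax in Hc; destruct Rle_dec; lra.
Qed.

Lemma second_difference_bound a b D :
  Ck_derivs a b 2 D ->
  exists M, 0 <= M /\ forall x h, 0 <= h -> a <= x - h -> x + h <= b ->
    Rabs ((D O (x + h) - D O x) - (D O x - D O (x - h))) <= 2 * M * h ^ 2.
Proof.
  intros [HD HD2]. destruct (cont_on_bounded a b (D 2%nat) HD2) as [M [HM0 HM]].
  exists M; split; [exact HM0|]. intros x h Hh Hl Hr.
  pose proof (taylor_remainder_bound a b 2 D M x (x + h) HD HM ltac:(lra) ltac:(lra)) as Tr.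
  pose proof (taylor_remainder_bound a b 2 D M x (x - h) HD HM ltac:(lra) ltac:(lra)) as Tl.
  assert (Hpoly : forall t, taylor_poly D 2 x t = D O x + D 1%nat x * (t - x))
    by (intro; simpl; field).
  rewrite Hpoly in Tr, Tl.
  replace (x + h - x) with h in Tr by ring.
  replace (x - h - x) with (- h) in Tl by ring.
  rewrite Rabs_Ropp, (Rabs_right h) in Tl by lra. rewrite (Rabs_right h) in Tr by lra.
  replace ((D O (x + h) - D O x) - (D O x - D O (x - h))) with
    ((D O (x + h) - (D O x + D 1%nat x * h)) + (D O (x - h) - (D O x + D 1%nat x * - h)))
    by ring.
  eapply Rle_trans; [apply Rabs_triang|]. lra.
Qed.

(* [m] and [p] stand for the steps h_{n-1} and h_n on either side of s_n. *)
Definition stencil_denom (m p : R) : R := m ^ 2 + 3 * m * p + p ^ 2.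
Definition stencil_a (m p : R) : R := 12 * p / ((m + p) * stencil_denom m p).
Definition stencil_b (m p : R) : R := - (12 / stencil_denom m p).
Definition stencil_c (m p : R) : R := 12 * m / ((m + p) * stencil_denom m p).
Definition stencil_d (m p : R) : R :=
  p * (m ^ 2 + p * m - p ^ 2) / ((m + p) * stencil_denom m p).
Definition stencil_e (m p : R) : R :=
  m * (p ^ 2 + p * m - m ^ 2) / ((m + p) * stencil_denom m p).

Definition compact_err (m p : R) (f f2 : R -> R) (s : R) : R :=
  stencil_d m p * f2 (s - m) + f2 s + stencil_e m p * f2 (s + p)
  - (stencil_a m p * f (s - m) + stencil_b m p * f s + stencil_c m p * f (s + p)).

Lemma trunc_err_compact_err phi D N n : (1 <= n)%nat ->
  trunc_err phi D N n =
  compact_err (step phi N (n - 1)) (step phi N n) (D O) (D 2%nat) (node phi N n).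
Proof.
  intros Hn. unfold trunc_err, compact_err.
  assert (Hl : node phi N n - step phi N (n - 1) = node phi N (n - 1))
    by (unfold step; replace (S (n - 1)) with n by lia; ring).
  assert (Hr : node phi N n + step phi N n = node phi N (S n)) by (unfold step; ring).
  rewrite Hl, Hr. reflexivity.
Qed.

(* The coefficients annihilate the Taylor terms of order <= 4; the
   fifth-order term survives on a non-uniform stencil, with a factor p - m. *)
Definition stencil_lead (m p : R) : R :=
  m * p / 15 * (p - m) * ((2 * m ^ 2 + 5 * m * p + 2 * p ^ 2) / (2 * stencil_denom m p)).

Lemma compact_err_taylor (G : nat -> R -> R) m p s : 0 < m -> 0 < p ->
  compact_err m p (G O) (G 2%nat) s =
  G 5%nat s * stencil_lead m p
  + stencil_d m p * (G 2%nat (s - m) - taylor_poly (fun j => G (2 + j)%nat) 4 s (s - m))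
  + stencil_e m p * (G 2%nat (s + p) - taylor_poly (fun j => G (2 + j)%nat) 4 s (s + p))
  - stencil_a m p * (G O (s - m) - taylor_poly G 6 s (s - m))
  - stencil_c m p * (G O (s + p) - taylor_poly G 6 s (s + p)).
Proof.
  intros Hm Hp.
  unfold compact_err, stencil_lead, stencil_a, stencil_b, stencil_c, stencil_d, stencil_e,
    stencil_denom.
  simpl. field. split; nra.
Qed.

Lemma Rabs_div_le_1 u q : 0 < q -> - q <= u <= q -> Rabs (u / q) <= 1.
Proof.
  intros Hq Hu. unfold Rdiv. rewrite Rabs_mult, Rabs_inv, (Rabs_right q) by lra.
  apply (Rmult_le_reg_r q); [lra|]. rewrite Rmult_assoc, Rinv_l, Rmult_1_r by lra.
  apply Rabs_le; lra.
Qed.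

Section StencilCoefficients.

Variables m p : R.
Hypotheses (Hm : 0 < m) (Hp : 0 < p).

Let denom_pos : 0 < stencil_denom m p.
Proof. unfold stencil_denom; nra. Qed.

Let cubic_pos : 0 < (m + p) * stencil_denom m p.
Proof. apply Rmult_lt_0_compat; lra. Qed.

Lemma stencil_d_bound : Rabs (stencil_d m p) <= 1.
Proof. apply Rabs_div_le_1; [exact cubic_pos | unfold stencil_denom; split; nra]. Qed.

Lemma stencil_e_bound : Rabs (stencil_e m p) <= 1.
Proof. apply Rabs_div_le_1; [exact cubic_pos | unfold stencil_denom; split; nra]. Qed.

Lemma stencil_a_bound : Rabs (stencil_a m p) <= 12 / m ^ 2.
Proof.
  replace (stencil_a m p) with (12 / m ^ 2 * (p * m ^ 2 / ((m + p) * stencil_denom m p)))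
    by (unfold stencil_a; field; lra).
  rewrite Rabs_mult, (Rabs_right (12 / m ^ 2)) by (apply Rle_ge, Rlt_le, Rdiv_lt_0_compat; nra).
  rewrite <- Rmult_1_r. apply Rmult_le_compat_l; [apply Rlt_le, Rdiv_lt_0_compat; nra|].
  apply Rabs_div_le_1; [exact cubic_pos | unfold stencil_denom; split; nra].
Qed.

Lemma stencil_c_bound : Rabs (stencil_c m p) <= 12 / p ^ 2.
Proof.
  replace (stencil_c m p) with (12 / p ^ 2 * (m * p ^ 2 / ((m + p) * stencil_denom m p)))
    by (unfold stencil_c; field; lra).
  rewrite Rabs_mult, (Rabs_right (12 / p ^ 2)) by (apply Rle_ge, Rlt_le, Rdiv_lt_0_compat; nra).
  rewrite <- Rmult_1_r. apply Rmult_le_compat_l; [apply Rlt_le, Rdiv_lt_0_compat; nra|].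
  apply Rabs_div_le_1; [exact cubic_pos | unfold stencil_denom; split; nra].
Qed.

Lemma stencil_lead_bound : Rabs (stencil_lead m p) <= m * p / 15 * Rabs (p - m).
Proof.
  unfold stencil_lead. rewrite !Rabs_mult, (Rabs_right (m * p / 15)) by nra.
  rewrite <- Rmult_1_r. apply Rmult_le_compat_l; [apply Rmult_le_pos; [nra | apply Rabs_pos]|].
  apply Rabs_div_le_1; [lra | unfold stencil_denom; split; nra].
Qed.

End StencilCoefficients.

Lemma Rabs_triang5 u1 u2 u3 u4 u5 :
  Rabs (u1 + u2 + u3 - u4 - u5) <= Rabs u1 + Rabs u2 + Rabs u3 + Rabs u4 + Rabs u5.
Proof. unfold Rabs; repeat destruct Rcase_abs; lra. Qed.

Lemma Rabs_mult_le u v U V : Rabs u <= U -> Rabs v <= V -> Rabs (u * v) <= U * V.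
Proof. intros; rewrite Rabs_mult; apply Rmult_le_compat; auto using Rabs_pos. Qed.

Lemma compact_err_bound A B D M5 M6 s m p :
  (forall i, (i < 6)%nat -> deriv_on A B (D i) (D (S i))) ->
  (forall u, A <= u <= B -> Rabs (D 5%nat u) <= M5) ->
  (forall u, A <= u <= B -> Rabs (D 6%nat u) <= M6) ->
  0 < m -> 0 < p -> A <= s - m -> s + p <= B ->
  Rabs (compact_err m p (D O) (D 2%nat) s)
  <= M5 * (m * p / 15 * Rabs (p - m)) + 13 * M6 * (m ^ 4 + p ^ 4).
Proof.
  intros HD HM5 HM6 Hm Hp HA HB.
  assert (Hs : A <= s <= B) by lra.
  assert (Hdist_l : Rabs (s - m - s) = m)
    by (replace (s - m - s) with (- m) by ring; rewrite Rabs_Ropp, Rabs_right; lra).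
  assert (Hdist_r : Rabs (s + p - s) = p)
    by (replace (s + p - s) with p by ring; rewrite Rabs_right; lra).
  assert (HD2 : forall i, (i < 4)%nat -> deriv_on A B (D (2 + i)%nat) (D (2 + S i)%nat))
    by (intros i Hi; apply HD; lia).
  pose proof (taylor_remainder_bound A B 6 D M6 s (s - m) HD HM6 Hs ltac:(lra)) as R0l.
  pose proof (taylor_remainder_bound A B 6 D M6 s (s + p) HD HM6 Hs ltac:(lra)) as R0r.
  pose proof (taylor_remainder_bound A B 4 (fun j => D (2 + j)%nat) M6 s (s - m)
                HD2 HM6 Hs ltac:(lra)) as R2l.
  pose proof (taylor_remainder_bound A B 4 (fun j => D (2 + j)%nat) M6 s (s + p)
                HD2 HM6 Hs ltac:(lra)) as R2r.
  rewrite Hdist_l in R0l, R2l. rewrite Hdist_r in R0r, R2r.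
  change (2 + 0)%nat with 2%nat in R2l, R2r.
  rewrite compact_err_taylor by assumption.
  eapply Rle_trans; [apply Rabs_triang5|].
  pose proof (Rabs_mult_le _ _ _ _ (HM5 s Hs) (stencil_lead_bound m p Hm Hp)).
  pose proof (Rabs_mult_le _ _ _ _ (stencil_d_bound m p Hm Hp) R2l).
  pose proof (Rabs_mult_le _ _ _ _ (stencil_e_bound m p Hm Hp) R2r).
  pose proof (Rabs_mult_le _ _ _ _ (stencil_a_bound m p Hm Hp) R0l).
  pose proof (Rabs_mult_le _ _ _ _ (stencil_c_bound m p Hm Hp) R0r).
  replace (12 / m ^ 2 * (M6 * m ^ 6)) with (12 * M6 * m ^ 4) in * by (field; lra).
  replace (12 / p ^ 2 * (M6 * p ^ 6)) with (12 * M6 * p ^ 4) in * by (field; lra).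
  lra.
Qed.

Lemma strictly_incr_on_le a b g x y :
  strictly_incr_on a b g -> a <= x -> x <= y -> y <= b -> g x <= g y.
Proof.
  intros Hg Hx Hxy Hy. destruct (Req_dec x y) as [->|Hne]; [lra|].
  apply Rlt_le, Hg; lra.
Qed.

Lemma node_neighbours phi N n : (2 <= N)%nat -> (1 <= n <= N - 1)%nat ->
  exists x, 0 <= x - 1 / INR N /\ x + 1 / INR N <= 1 /\
    node phi N (n - 1) = phi (x - 1 / INR N) /\ node phi N n = phi x /\
    node phi N (S n) = phi (x + 1 / INR N).
Proof.
  intros HN Hn. unfold node.
  assert (2 <= INR N) by (replace 2 with (INR 2) by (simpl; ring); apply le_INR; lia).
  assert (1 <= INR n) by (replace 1 with (INR 1) by reflexivity; apply le_INR; lia).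
  assert (INR n + 1 <= INR N) by (rewrite <- S_INR; apply le_INR; lia).
  exists (INR n / INR N). rewrite minus_INR, (S_INR n) by lia. change (INR 1) with 1.
  repeat split.
  - apply (Rmult_le_reg_r (INR N)); [lra|]. field_simplify; lra.
  - apply (Rmult_le_reg_r (INR N)); [lra|]. field_simplify; lra.
  - f_equal; field; lra.
  - f_equal; field; lra.
Qed.

Theorem lemma1 (phi : R -> R) (D : nat -> R -> R) :
  strictly_incr_on 0 1 phi ->
  Ck_on 0 1 2 phi ->
  Ck_derivs (phi 0) (phi 1) 6 D ->
  exists C : R, forall N n : nat, (2 <= N)%nat -> (1 <= n <= N - 1)%nat ->
    Rabs (trunc_err phi D N n) <= C * (1 / INR N) ^ 4.
Proof.
  intros Hinc [P [HP0 HP]] [HD HD6]. subst phi.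
  destruct (cont_on_bounded _ _ _ (cont_on_of_deriv_on _ _ _ _ (HD 5%nat ltac:(lia))))
    as [M5 [HM5p HM5]].
  destruct (cont_on_bounded _ _ _ HD6) as [M6 [HM6p HM6]].
  destruct (lipschitz_of_deriv_on 0 1 (P O) (P 1%nat) (proj1 HP O ltac:(lia))
              (cont_on_of_deriv_on _ _ _ _ (proj1 HP 1%nat ltac:(lia)))) as [M1 [HM1p HM1]].
  destruct (second_difference_bound 0 1 P HP) as [M2 [HM2p HM2]].
  exists (M5 * M1 ^ 2 * (2 * M2) / 15 + 26 * M6 * M1 ^ 4).
  intros N n HN Hn.
  destruct (node_neighbours (P O) N n HN Hn) as [x [Hxl [Hxr [El [Ec Er]]]]].
  set (h := 1 / INR N) in *.
  assert (Hh : 0 < h) by (unfold h; apply Rdiv_lt_0_compat; [lra | apply lt_0_INR; lia]).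
  rewrite trunc_err_compact_err by lia.
  assert (Hm : step (P O) N (n - 1) = P O x - P O (x - h))
    by (unfold step; replace (S (n - 1)) with n by lia; congruence).
  assert (Hp : step (P O) N n = P O (x + h) - P O x) by (unfold step; congruence).
  rewrite Hm, Hp, Ec.
  set (m := P O x - P O (x - h)). set (p := P O (x + h) - P O x).
  assert (Hm0 : 0 < m) by (unfold m; enough (P O (x - h) < P O x) by lra; apply Hinc; lra).
  assert (Hp0 : 0 < p) by (unfold p; enough (P O x < P O (x + h)) by lra; apply Hinc; lra).
  assert (Hmh : m <= M1 * h).
  { pose proof (HM1 (x - h) x ltac:(lra) ltac:(lra)) as Hl.
    replace (x - (x - h)) with h in Hl by ring. rewrite (Rabs_right h) in Hl by lra.
    pose proof (RRle_abs m). unfold m in *; lra. }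
  assert (Hph : p <= M1 * h).
  { pose proof (HM1 x (x + h) ltac:(lra) ltac:(lra)) as Hr.
    replace (x + h - x) with h in Hr by ring. rewrite (Rabs_right h) in Hr by lra.
    pose proof (RRle_abs p). unfold p in *; lra. }
  assert (Hpm : Rabs (p - m) <= 2 * M2 * h ^ 2) by (apply HM2; lra).
  eapply Rle_trans.
  { apply (compact_err_bound (P O 0) (P O 1) D M5 M6); auto.
    - unfold m; replace (P O x - (P O x - P O (x - h))) with (P O (x - h)) by ring.
      apply (strictly_incr_on_le 0 1); auto; lra.
    - unfold p; replace (P O x + (P O (x + h) - P O x)) with (P O (x + h)) by ring.
      apply (strictly_incr_on_le 0 1); auto; lra. }
  assert (Hmp : m * p / 15 * Rabs (p - m) <= (M1 * h) ^ 2 / 15 * (2 * M2 * h ^ 2)).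
  { apply Rmult_le_compat; [nra | apply Rabs_pos | | exact Hpm].
    apply Rmult_le_compat_r; [lra | nra]. }
  assert (Hm4 : m ^ 4 <= (M1 * h) ^ 4) by (apply pow_incr; lra).
  assert (Hp4 : p ^ 4 <= (M1 * h) ^ 4) by (apply pow_incr; lra).
  apply Rle_trans with (M5 * ((M1 * h) ^ 2 / 15 * (2 * M2 * h ^ 2)) + 13 * M6 * (2 * (M1 * h) ^ 4)).
  - apply Rplus_le_compat; [apply Rmult_le_compat_l; lra|].
    apply Rmult_le_compat_l; lra.
  - right. field.
Qed.
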